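(* Let $\langle E,\rightarrow\rangle$ be a computation, $b_1,b_2$ regular predicates and $b=b_1\wedge b_2$. For every event $e$ and process $p_i$, $F_b(e)[i]$ equals or precedes (on $p_i$) $F_{\min}(e)[i]$.
   Context: A computation is a directed graph $\langle E, \rightarrow\rangle$ whose vertices (events) are partitioned among processes $p_1,\dots,p_n$; events on each process are totally ordered, each process has an initial event and a final event, the path relation contains Lamport's happened-before relation, and all initial (resp. final) events lie in one strongly connected component. A vertex subset $C$ is a consistent cut if for every edge $(u,v)$, $v\in C$ implies $u\in C$. A predicate is regular if whenever consistent cuts $C_1,C_2$ satisfy it, so do $C_1\cap C_2$ and $C_1\cup C_2$. The slice of the computation with respect to a predicate $c$ is a directed graph on $E$ whose consistent cuts include every consistent cut satisfying $c$ and which has the fewest consistent cuts among all such graphs. For a regular predicate $c$, $F_c(e)[i]$ is the earliest event on $p_i$ reachable from $e$ by a path in the slice with respect to $c$. $F_{\min}(e)[i]$ is whichever of $F_{b_1}(e)[i]$ and $F_{b_2}(e)[i]$ occurs earlier on $p_i$. *)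

From mathcomp Require Import all_boot.
Set Implicit Arguments. Unset Strict Implicit. Unset Printing Implicit Defensive.

(* A computation <E, ->> on a finite set of events E.
   - [proc] partitions the events among processes p_0 .. p_(nproc-1);
   - [po x y] : x strictly precedes y on the same process (a strict total
     order on the events of each process);
   - [msg] : the message relation (send -> receive); Lamport's
     happened-before is the transitive closure of [po] and [msg];
   - [edge] : the edges of the directed graph. *)
Record computation (E : finType) := Computation {
  nproc : nat;
  proc : E -> 'I_nproc;
  po : rel E;
  msg : rel E;
  edge : rel E;
  po_same : forall x y, po x y -> proc x = proc y;
  po_irr : irreflexive po;
  po_trans : transitive po;
  po_total : forall x y, proc x = proc y -> x != y -> po x y || po y x;
  has_initial : forall i, exists x, proc x = i /\ forall z, ~~ po z x;
  has_final : forall i, exists x, proc x = i /\ forall z, ~~ po x z;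
  hb_in_path : forall x y, po x y || msg x y -> connect edge x y;
  initial_scc : forall x y, (forall z, ~~ po z x) -> (forall z, ~~ po z y) ->
                connect edge x y;
  final_scc : forall x y, (forall z, ~~ po x z) -> (forall z, ~~ po y z) ->
              connect edge x y
}.

Definition consistent (E : finType) (g : rel E) (C : {set E}) : bool :=
  [forall u, forall v, g u v ==> (v \in C) ==> (u \in C)].

Definition regular (E : finType) (G : computation E) (c : pred {set E}) : Prop :=
  forall C1 C2, consistent (edge G) C1 -> consistent (edge G) C2 ->
    c C1 -> c C2 -> c (C1 :&: C2) && c (C1 :|: C2).

Definition is_slice (E : finType) (G : computation E) (c : pred {set E})
    (s : rel E) : Prop :=
  (forall C, consistent (edge G) C -> c C -> consistent s C) /\
  (forall g : rel E, (forall C, consistent (edge G) C -> c C -> consistent g C) ->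
     #|[set C : {set E} | consistent s C]| <= #|[set C : {set E} | consistent g C]|).

Definition le_po (E : finType) (G : computation E) (x y : E) : bool :=
  (x == y) || po G x y.

Definition pmin (E : finType) (G : computation E) (x y : E) : E :=
  if le_po G x y then x else y.

(* f = F_c(e)[i] where s is the slice w.r.t. c: f is the earliest event on
   p_i reachable from e by a path in s. *)
Definition is_F (E : finType) (G : computation E) (s : rel E) (e : E)
    (i : 'I_(nproc G)) (f : E) : bool :=
  [&& proc G f == i, connect s e f &
      [forall g, (proc G g == i) && connect s e g ==> le_po G f g]].
Arguments is_F {E} G s e i f.

From mathcomp Require Import all_boot.

Set Implicit Arguments.
Unset Strict Implicit.
Unset Printing Implicit Defensive.

(* The union of the slices for b = b1 /\ b2 and for b1 still has every cut
   satisfying b among its consistent cuts, and its cuts are cuts of the slice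
   for b; minimality of that slice forces equality, so every cut of the slice
   for b is a cut of the slice for b1.  Taking as cut the complement of the
   events reachable from a fixed event turns this inclusion of cuts into an
   inclusion of reachability: whatever is reachable from e in the slice for b1
   (or b2) is reachable from e in the slice for b.  Since F_b(e)[i] is the
   earliest such event on p_i, it precedes both F_b1(e)[i] and F_b2(e)[i]. *)

Lemma consistentP (E : finType) (g : rel E) (C : {set E}) :
  reflect (forall u v, g u v -> v \in C -> u \in C) (consistent g C).
Proof.
apply: (iffP forallP) => [H u v guv vC | H u].
  by have /forallP/(_ v) := H u; rewrite guv vC.
by apply/forallP => v; apply/implyP => guv; apply/implyP; apply: H.
Qed.

Lemma consistent_relU (E : finType) (s t : rel E) (C : {set E}) :
  consistent (relU s t) C = consistent s C && consistent t C.
Proof.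
apply/consistentP/andP => [H | [/consistentP Hs /consistentP Ht]].
  by split; apply/consistentP => u v uv; apply: H; rewrite /= uv ?orbT.
by move=> u v /orP[]; [apply: Hs | apply: Ht].
Qed.

Lemma slice_consistent_sub (E : finType) (G : computation E)
    (b b' : pred {set E}) (s s' : rel E) :
  (forall C, b C -> b' C) -> is_slice G b s -> is_slice G b' s' ->
  forall C, consistent s C -> consistent s' C.
Proof.
move=> bb' [s_cuts s_min] [s'_cuts _] C sC.
have u_cuts C' : consistent (edge G) C' -> b C' -> consistent (relU s s') C'.
  by move=> GC' bC'; rewrite consistent_relU s_cuts ?s'_cuts ?bb'.
have u_sub : [set C' | consistent (relU s s') C'] \subset
             [set C' | consistent s C'].
  by apply/subsetP => C'; rewrite !inE consistent_relU => /andP[].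
have /eqP u_eq : [set C' | consistent (relU s s') C'] ==
                 [set C' | consistent s C'].
  by rewrite eqEcard u_sub (s_min _ u_cuts).
have : C \in [set C' | consistent (relU s s') C'] by rewrite u_eq inE.
by rewrite inE consistent_relU => /andP[].
Qed.

Lemma consistent_sub_connect (E : finType) (s s' : rel E) :
  (forall C, consistent s C -> consistent s' C) ->
  subrel (connect s') (connect s).
Proof.
move=> ss'; apply: connect_sub => u v s'uv.
pose unreached := ~: [set y | connect s u y].
have /ss'/consistentP unreached_cut : consistent s unreached.
  apply/consistentP => x y sxy; rewrite !inE; apply: contra => ux.
  exact: connect_trans ux (connect1 sxy).
apply: contraTT (connect0 s u) => not_uv.
by have := unreached_cut u v s'uv; rewrite !inE => ->.
Qed.

Lemma slice_connect_sub (E : finType) (G : computation E)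
    (b b' : pred {set E}) (s s' : rel E) :
  (forall C, b C -> b' C) -> is_slice G b s -> is_slice G b' s' ->
  subrel (connect s') (connect s).
Proof.
by move=> bb' sl sl'; apply: consistent_sub_connect; apply: slice_consistent_sub sl sl'.
Qed.

Lemma is_F_le (E : finType) (G : computation E) (s : rel E) (e : E)
    (i : 'I_(nproc G)) (f g : E) :
  is_F G s e i f -> proc G g = i -> connect s e g -> le_po G f g.
Proof.
by move=> /and3P[_ _ /forallP/(_ g)] + gi eg; rewrite gi eg eqxx.
Qed.

Theorem lemma13 (E : finType) (G : computation E) (b1 b2 : pred {set E})
    (s s1 s2 : rel E) :
  regular G b1 -> regular G b2 ->
  is_slice G (fun C => b1 C && b2 C) s ->
  is_slice G b1 s1 -> is_slice G b2 s2 ->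
  forall (e : E) (i : 'I_(nproc G)) (f f1 f2 : E),
    is_F G s e i f -> is_F G s1 e i f1 -> is_F G s2 e i f2 ->
    le_po G f (pmin G f1 f2).
Proof.
move=> _ _ sl sl1 sl2 e i f f1 f2 Ff /and3P[/eqP f1i ef1 _] /and3P[/eqP f2i ef2 _].
have s1_s : subrel (connect s1) (connect s).
  by apply: slice_connect_sub sl sl1 => C /andP[].
have s2_s : subrel (connect s2) (connect s).
  by apply: slice_connect_sub sl sl2 => C /andP[].
by rewrite /pmin; case: ifP => _; apply: (is_F_le Ff); auto.
Qed.
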